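(* Let $A=B[x;\alpha,\delta]_p$ be a Poisson polynomial algebra over a field $k$ of characteristic zero. Assume that $\delta$ is locally nilpotent and that $\alpha\delta=\delta(\alpha+s)$ for some $s\in k^\times$. Then the rule $$\theta(b)=\sum_{n=0}^\infty \frac{1}{n!}\left(\frac{-1}{s}\right)^n\delta^n(b)x^{-n}$$ defines a $k$-algebra homomorphism $\theta:B\to B[x^{\pm1}]$, and $\{x,\theta(b)\}=\theta\alpha(b)\,x$ for all $b\in B$ (bracket computed in the Poisson Laurent polynomial algebra $B[x^{\pm1};\alpha,\delta]_p$).
   Context: If $B$ is a Poisson algebra, $\alpha$ a Poisson derivation of $B$ and $\delta$ a derivation of $B$ with $\delta(\{a,b\})=\{\delta(a),b\}+\{a,\delta(b)\}+\alpha(a)\delta(b)-\delta(a)\alpha(b)$ for $a,b\in B$, then $B[x;\alpha,\delta]_p$ is $B[x]$ with the unique Poisson bracket extending that of $B$ with $\{x,b\}=\alpha(b)x+\delta(b)$, and $B[x^{\pm1};\alpha,\delta]_p$ is the unique extension of this Poisson structure to $B[x^{\pm1}]$. A derivation $\delta$ is locally nilpotent if for each $b$ some power $\delta^N(b)=0$. *)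

From HB Require Import structures.
From mathcomp Require Import all_boot all_order all_algebra.
From mathcomp Require Import generic_quotient ring_quotient.
From Stdlib Require Import ClassicalEpsilon.

Set Implicit Arguments.
Unset Strict Implicit.
Unset Printing Implicit Defensive.

Import GRing.Theory.
Local Open Scope ring_scope.
Local Open Scope quotient_scope.

(* Poisson algebras.  The scalar action is passed explicitly as [sc]  *)
(* so that the same notion applies to B (a k-algebra, sc = *:%R) and  *)
(* to the Laurent ring B[x^{+-1}] (k acting through k -> B -> L).     *)
Definition is_poisson_bracket (k : fieldType) (A : comNzRingType)
    (sc : k -> A -> A) (br : A -> A -> A) : Prop :=
  [/\ (forall (c : k) a a' b, br (sc c a + a') b = sc c (br a b) + br a' b),
      (forall a b, br a b = - br b a),
      (forall a b c, br a (br b c) + br b (br c a) + br c (br a b) = 0)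
    & (forall a b c, br a (b * c) = br a b * c + b * br a c)].

Definition is_derivation (k : fieldType) (B : comAlgType k) (d : B -> B) : Prop :=
  (forall (c : k) a b, d (c *: a + b) = c *: d a + d b) /\
  (forall a b, d (a * b) = d a * b + a * d b).

Definition is_poisson_derivation (k : fieldType) (B : comAlgType k)
    (br : B -> B -> B) (a : B -> B) : Prop :=
  is_derivation a /\ (forall x y, a (br x y) = br (a x) y + br x (a y)).

(* The compatibility condition making B[x; alpha, delta]_p a Poisson algebra *)
Definition poisson_poly_data (k : fieldType) (B : comAlgType k)
    (br : B -> B -> B) (alpha delta : B -> B) : Prop :=
  [/\ is_poisson_bracket *:%R br,
      is_poisson_derivation br alpha,
      is_derivation delta
    & forall a b, delta (br a b) = br (delta a) b + br a (delta b)
                    + alpha a * delta b - delta a * alpha b].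

Definition locally_nilpotent (B : zmodType) (d : B -> B) : Prop :=
  forall b, exists N : nat, iter N d b = 0.

(* Laurent polynomial ring B[x^{+-1}] := B[x, y] / (x y - 1).         *)
(* Outer variable 'X is x, inner variable ('X)%:P is y = x^{-1}.      *)
Section Laurent.
Variable B : comNzRingType.

Definition laurent_gen : {poly {poly B}} := 'X * ('X)%:P - 1.

Definition laurent_ideal : pred {poly {poly B}} := fun p =>
  if excluded_middle_informative (exists q, p = q * laurent_gen)
  then true else false.

Lemma laurent_idealP p :
  reflect (exists q, p = q * laurent_gen) (p \in laurent_ideal).
Proof.
rewrite unfold_in /laurent_ideal.
by case: excluded_middle_informative => h; constructor.
Qed.

Lemma laurent_gen_ok (q : {poly {poly B}}) : q * laurent_gen != 1.
Proof.
apply/eqP => h.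
have q0 : q != 0 by apply: contra_eq_neq h => ->; rewrite mul0r eq_sym oner_neq0.
have eg : laurent_gen = ('X)%:P * 'X + (-1)%:P.
  by rewrite /laurent_gen mulrC polyCN.
have sg : size laurent_gen = 2%N.
  by rewrite eg size_MXaddC polyC_eq0 polyX_eq0 /= size_polyC polyX_eq0.
have lg : lead_coef laurent_gen = 'X.
  by rewrite /lead_coef sg eg coefD coefMX coefC /= coefC /= addr0.
have hs : size (q * laurent_gen) = size (1 : {poly {poly B}}) by rewrite h.
move: hs; rewrite size_proper_mul ?lg.
  by rewrite sg size_poly1 addn2 /=; move: q0; rewrite -size_poly_eq0; case: (size q).
by rewrite -size_poly_eq0 size_mulX ?lead_coef_eq0.
Qed.

Lemma laurent_ideal_closed : idealr_closed laurent_ideal.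
Proof.
split.
- by apply/laurent_idealP; exists 0; rewrite mul0r.
- apply/negP => /laurent_idealP [q hq].
  by move/eqP: (laurent_gen_ok q); rewrite -hq.
- move=> a u v /laurent_idealP [q1 ->] /laurent_idealP [q2 ->].
  by apply/laurent_idealP; exists (a * q1 + q2); rewrite mulrDl mulrA.
Qed.

End Laurent.

HB.instance Definition _ (B : comNzRingType) :=
  isIdealr.Build {poly {poly B}} (@laurent_ideal B) (@laurent_ideal_closed B).

Definition laurent (B : comNzRingType) := {ideal_quot (@laurent_ideal B : idealr _)}.
HB.instance Definition _ (B : comNzRingType) := GRing.ComNzRing.on (laurent B).
HB.instance Definition _ (B : comNzRingType) :=
  EqQuotient.on (laurent B).

Section LaurentOps.
Variable B : comNzRingType.
Local Notation L := (laurent B).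

Definition lemb (b : B) : L := \pi_L ((b%:P)%:P).
Definition lX : L := \pi_L 'X.
Definition lXinv : L := \pi_L (('X : {poly B})%:P).
End LaurentOps.

Definition theta_coef (k : fieldType) (s : k) (n : nat) : k :=
  (n`!%:R)^-1 * (- s^-1) ^+ n.

Definition theta_sum (k : fieldType) (B : comAlgType k) (s : k)
    (delta : B -> B) (N : nat) (b : B) : laurent B :=
  \sum_(n < N) lemb (theta_coef s n *: iter n delta b) * lXinv B ^+ n.

From HB Require Import structures.
From mathcomp Require Import all_boot all_order all_algebra.
From mathcomp Require Import generic_quotient ring_quotient ring.
Import GRing.Theory.
Local Open Scope ring_scope.
Local Open Scope quotient_scope.

(* theta is evaluation at x^{-1} of the polynomial sum_n c_n delta^n(b) X^n with
   c_n = (1/n!) (-1/s)^n, i.e. theta = exp(-delta x^{-1} / s).  It is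
   multiplicative by the Leibniz rule for delta^n and c_n C(n, j) = c_j c_{n-j}.
   Since {x, x^{-1}} = 0 and alpha delta^n = delta^n (alpha + n s), the bracket
   {x, c_n delta^n(b) x^{-n}} equals c_n delta^n(alpha b) x^{-n} x plus the
   difference of consecutive terms of c_n delta^{n+1}(b) x^{-n}
   (as c_{n+1} (n+1) s = - c_n), so the extra terms telescope to zero. *)

Section Derivation.
Context {k : fieldType} {B : comAlgType k} {d : B -> B}.
Hypothesis hd : is_derivation d.

Lemma derivation0 : d 0 = 0.
Proof.
case: hd => hlin _; have := hlin 1 0 0; rewrite !scale1r addr0 => h.
by apply: (addrI (d 0)); rewrite addr0 -h.
Qed.

Lemma derivationD a b : d (a + b) = d a + d b.
Proof. by case: hd => hlin _; rewrite -{1}[a]scale1r hlin scale1r. Qed.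

Lemma derivationZ c a : d (c *: a) = c *: d a.
Proof. by case: hd => hlin _; rewrite -[c *: a]addr0 hlin derivation0 addr0. Qed.

Lemma derivationM a b : d (a * b) = d a * b + a * d b.
Proof. by case: hd. Qed.

Lemma derivation1 : d 1 = 0.
Proof.
have := derivationM 1 1; rewrite !mul1r mulr1 => h.
by apply: (addrI (d 1)); rewrite addr0 -h.
Qed.

Lemma derivationMn a m : d (a *+ m) = d a *+ m.
Proof. by elim: m => [|m IH]; rewrite ?mulr0n ?derivation0 // !mulrS derivationD IH. Qed.

Lemma derivation_sum n (F : 'I_n -> B) : d (\sum_(i < n) F i) = \sum_(i < n) d (F i).
Proof.
elim: n F => [|n IH] F; first by rewrite !big_ord0 derivation0.
by rewrite !big_ord_recr /= derivationD IH.
Qed.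

Lemma iter_derivation0 n : iter n d 0 = 0.
Proof. by elim: n => //= n ->; rewrite derivation0. Qed.

Lemma iter_derivationD n a b : iter n d (a + b) = iter n d a + iter n d b.
Proof. by elim: n => //= n ->; rewrite derivationD. Qed.

Lemma iter_derivationZ n c a : iter n d (c *: a) = c *: iter n d a.
Proof. by elim: n => //= n ->; rewrite derivationZ. Qed.

Lemma iter_derivation1 n : iter n.+1 d 1 = 0.
Proof. by elim: n => [|n IH]; rewrite /= ?derivation1 // -iterS IH derivation0. Qed.

Lemma iter_derivation_eq0 {N n b} : iter N d b = 0 -> (N <= n)%N -> iter n d b = 0.
Proof. by move=> hN leNn; rewrite -(subnK leNn) iterD hN iter_derivation0. Qed.

Lemma iter_derivationM n a b :
  iter n d (a * b) = \sum_(i < n.+1) (iter i d a * iter (n - i) d b) *+ 'C(n, i).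
Proof.
elim: n => [|n IH]; first by rewrite big_ord1 /= mulr1n.
rewrite iterS IH derivation_sum.
under eq_bigr => i _ do rewrite derivationMn derivationM mulrnDl.
rewrite big_split /= [in RHS]big_ord_recl /= bin0 mulr1n.
under [in RHS]eq_bigr => i _ do rewrite add0n /bump /= add1n binS mulrnDr subSS.
rewrite big_split /= addrC [RHS]addrA; congr (_ + _).
rewrite big_ord_recl /= subn0 bin0 mulr1n; congr (_ + _).
rewrite [in RHS]big_ord_recr /= bin_small // mulr0n addr0.
by apply: eq_bigr => i _; rewrite add0n /bump /= add1n -(subnSK (ltn_ord i)).
Qed.

End Derivation.

Section PoissonBracket.
Context {k : fieldType} {A : comNzRingType} {sc : k -> A -> A} {br : A -> A -> A}.
Hypotheses (hbr : is_poisson_bracket sc br) (sc1 : forall a, sc 1 a = a).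

Lemma bracketNC a b : br a b = - br b a.
Proof. by case: hbr. Qed.

Lemma bracketMr a b c : br a (b * c) = br a b * c + b * br a c.
Proof. by case: hbr. Qed.

Lemma bracketDl a a' b : br (a + a') b = br a b + br a' b.
Proof. by case: hbr => hlin _ _ _; have := hlin 1 a a' b; rewrite !sc1. Qed.

Lemma bracketDr a b b' : br a (b + b') = br a b + br a b'.
Proof. by rewrite bracketNC bracketDl opprD -!bracketNC. Qed.

Lemma bracket0r a : br a 0 = 0.
Proof.
have := bracketDr a 0 0; rewrite addr0 => h.
by apply: (addrI (br a 0)); rewrite addr0 -h.
Qed.

Lemma bracket_sumr a n (F : 'I_n -> A) : br a (\sum_(i < n) F i) = \sum_(i < n) br a (F i).
Proof.
elim: n F => [|n IH] F; first by rewrite !big_ord0 bracket0r.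
by rewrite !big_ord_recr /= bracketDr IH.
Qed.

Lemma bracket1r a : br a 1 = 0.
Proof.
have := bracketMr a 1 1; rewrite !mulr1 mul1r => h.
by apply: (addrI (br a 1)); rewrite addr0 -h.
Qed.

Lemma bracketii (two_torsion_free : forall a : A, a *+ 2 = 0 -> a = 0) a : br a a = 0.
Proof. by apply: two_torsion_free; rewrite mulr2n {1}bracketNC addNr. Qed.

Lemma bracket_inv_eq0 {a u v} : u * v = 1 -> br a u = 0 -> br a v = 0.
Proof.
move=> uv1 au0; have := bracketMr a u v.
rewrite uv1 bracket1r au0 mul0r add0r => /(congr1 ( *%R v)).
by rewrite mulr0 mulrA [v * u]mulrC uv1 mul1r.
Qed.

Lemma bracketXr_eq0 {a u} n : br a u = 0 -> br a (u ^+ n) = 0.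
Proof.
move=> au0; elim: n => [|n IH]; first by rewrite expr0 bracket1r.
by rewrite exprS bracketMr au0 IH mul0r mulr0 addr0.
Qed.

End PoissonBracket.

HB.instance Definition _ (B : comNzRingType) :=
  GRing.RMorphism.copy (@lemb B) (\pi_(laurent B) \o polyC \o polyC).

Lemma lX_mulXinv (B : comNzRingType) : lX B * lXinv B = 1.
Proof.
rewrite /lX /lXinv -rmorphM -(rmorph1 (\pi_(laurent B))).
apply/eqP; rewrite -Quotient.idealrBE.
by apply/laurent_idealP; exists 1; rewrite mul1r.
Qed.

Section ThetaCoef.
Context {k : fieldType} (s : k).
Hypothesis hchar : [pchar k] =i pred0.

Lemma natr_neq0 n : (n%:R : k) != 0 = (n != 0%N).
Proof. by move/pcharf0P: hchar => ->. Qed.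

Lemma natr_fact_neq0 n : (n`!%:R : k) != 0.
Proof. by rewrite natr_neq0 -lt0n fact_gt0. Qed.

Lemma theta_coef_bin {n j} :
  (j <= n)%N -> theta_coef s n * ('C(n, j))%:R = theta_coef s j * theta_coef s (n - j).
Proof.
move=> lejn; rewrite /theta_coef -(bin_fact lejn) !natrM.
have -> : (- s^-1) ^+ n = (- s^-1) ^+ j * (- s^-1) ^+ (n - j) by rewrite -exprD subnKC.
have bin_neq0 : ('C(n, j)%:R : k) != 0 by rewrite natr_neq0 -lt0n bin_gt0.
by field; rewrite bin_neq0 !natr_fact_neq0.
Qed.

Lemma theta_coefS (s_neq0 : s != 0) m :
  theta_coef s m.+1 * (m.+1%:R * s) = - theta_coef s m.
Proof.
rewrite /theta_coef factS natrM exprS.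
have succ_neq0 : (m%:R + 1 : k) != 0 by rewrite natr1 natr_neq0.
by rewrite -natr1; field; rewrite natr_fact_neq0 s_neq0 succ_neq0.
Qed.

End ThetaCoef.

Section Theta.
Context {k : fieldType} {B : comAlgType k} {br : B -> B -> B} {alpha delta : B -> B}.
Variable s : k.
Hypotheses (hchar : [pchar k] =i pred0) (hpd : poisson_poly_data br alpha delta)
  (hnil : locally_nilpotent delta).

Local Notation L := (laurent B).
Local Notation x := (lX B).
Local Notation y := (lXinv B).

Let hdelta : is_derivation delta. Proof. by case: hpd. Qed.
Let halpha : is_derivation alpha. Proof. by case: hpd => _ []. Qed.

Lemma exists_iter_delta_eq0 b : exists N, iter N delta b == 0.
Proof. by have [N /eqP] := hnil b; exists N. Qed.

Definition nil_index (b : B) : nat := xchoose (exists_iter_delta_eq0 b).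

Lemma iter_nil_index b : iter (nil_index b) delta b = 0.
Proof. exact/eqP/(xchooseP (exists_iter_delta_eq0 b)). Qed.

Definition theta_term (b : B) (n : nat) : L := lemb (theta_coef s n *: iter n delta b).

Lemma theta_term_eq0 {N b n} : iter N delta b = 0 -> (N <= n)%N -> theta_term b n = 0.
Proof.
by move=> hN leNn; rewrite /theta_term (iter_derivation_eq0 hdelta hN leNn) scaler0 rmorph0.
Qed.

Definition theta_poly (b : B) : {poly L} := \poly_(n < nil_index b) theta_term b n.

Definition theta (b : B) : L := (theta_poly b).[y].

Lemma coef_theta_poly b n : (theta_poly b)`_n = theta_term b n.
Proof.
rewrite coef_poly; case: ltnP => // le_n.
by rewrite (theta_term_eq0 (iter_nil_index b) le_n).
Qed.

Lemma theta_sumE {N b} : iter N delta b = 0 -> theta_sum s delta N b = theta b.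
Proof.
move=> hN; rewrite /theta_sum -(horner_poly N (theta_term b)); congr horner.
apply/polyP => n; rewrite coef_theta_poly coef_poly.
by case: ltnP => // le_n; rewrite (theta_term_eq0 hN le_n).
Qed.

Lemma theta_poly1 : theta_poly 1 = 1.
Proof.
apply/polyP => -[|n]; rewrite coef_theta_poly coefC /theta_term.
  by rewrite /theta_coef /= invr1 mul1r scale1r rmorph1.
by rewrite (iter_derivation1 hdelta) scaler0 rmorph0.
Qed.

Lemma theta_polyD a b : theta_poly (a + b) = theta_poly a + theta_poly b.
Proof.
apply/polyP => n; rewrite coefD !coef_theta_poly /theta_term.
by rewrite (iter_derivationD hdelta) scalerDr rmorphD.
Qed.

Lemma theta_polyM a b : theta_poly (a * b) = theta_poly a * theta_poly b.
Proof.
apply/polyP => n; rewrite coefM coef_theta_poly /theta_term.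
rewrite (iter_derivationM hdelta) scaler_sumr rmorph_sum; apply: eq_bigr => j _.
rewrite !coef_theta_poly -rmorphM -scaler_nat scalerA -scalerAl -scalerAr scalerA.
by rewrite (theta_coef_bin s hchar (ltnSE (ltn_ord j))).
Qed.

Lemma theta_polyZ c b : theta_poly (c *: b) = (lemb c%:A)%:P * theta_poly b.
Proof.
apply/polyP => n; rewrite coefCM !coef_theta_poly /theta_term.
by rewrite (iter_derivationZ hdelta) -rmorphM scalerA mulrC -scalerA -scalerAl mul1r.
Qed.

Lemma theta_is_algebra_morphism :
  [/\ theta 1 = 1,
      forall a b, theta (a + b) = theta a + theta b,
      forall a b, theta (a * b) = theta a * theta b
    & forall (c : k) b, theta (c *: b) = lemb c%:A * theta b].
Proof.
split=> [|a b|a b|c b]; rewrite /theta.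
- by rewrite theta_poly1 hornerC.
- by rewrite theta_polyD hornerD.
- by rewrite theta_polyM hornerM.
- by rewrite theta_polyZ hornerM hornerC.
Qed.

Lemma laurent_two_torsion_free (z : L) : z *+ 2 = 0 -> z = 0.
Proof.
move=> z2; have two_neq0 : (2 : k) != 0 by rewrite (natr_neq0 hchar).
have half2 : (2^-1 : k)%:A *+ 2 = 1 :> B by rewrite scalerMnl -mulr_natr mulVf ?scale1r.
by rewrite -[z]mul1r -(rmorph1 (@lemb B)) -half2 rmorphMn mulrnAl -mulrnAr z2 mulr0.
Qed.

Hypotheses (hs : s != 0) (had : forall b, alpha (delta b) = delta (alpha b + s *: b)).

Lemma alpha_iter_delta n b :
  alpha (iter n delta b) = iter n delta (alpha b + (n%:R * s) *: b).
Proof.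
elim: n => [|n IH]; first by rewrite /= mul0r scale0r addr0.
rewrite iterS had IH -(iter_derivationZ hdelta) -(iter_derivationD hdelta) -iterS.
by rewrite -addrA -scalerDl mulrSr mulrDl mul1r.
Qed.

(* theta_tail b n.+1 = c_n delta^{n+1}(b) x^{-n}; the shift makes theta_tail b 0 = 0
   the base of the telescoping sum in {x, theta b}. *)
Definition theta_tail (b : B) (n : nat) : L :=
  if n is m.+1 then lemb (theta_coef s m *: iter n delta b) * y ^+ m else 0.

Lemma theta_tail_shift b n :
  lemb ((theta_coef s n * (n%:R * s)) *: iter n delta b) * (x * y ^+ n)
  = - theta_tail b n.
Proof.
case: n => [|m]; first by rewrite mul0r mulr0 scale0r rmorph0 mul0r oppr0.
rewrite (theta_coefS s hchar hs) exprS [x * _]mulrA lX_mulXinv mul1r.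
by rewrite scaleNr rmorphN mulNr.
Qed.

Section XBracket.
Variable P : L -> L -> L.
Hypotheses (hP : is_poisson_bracket (fun (c : k) (f : L) => lemb c%:A * f) P)
  (hPx : forall b, P x (lemb b) = lemb (alpha b) * x + lemb (delta b)).

Let sc1 (f : L) : lemb (1 : k)%:A * f = f. Proof. by rewrite scale1r rmorph1 mul1r. Qed.

Lemma bracket_x_Xinv : P x y = 0.
Proof.
apply: (bracket_inv_eq0 hP (lX_mulXinv B)).
exact: (bracketii hP laurent_two_torsion_free).
Qed.

Lemma bracket_x_theta_term b n :
  P x (theta_term b n * y ^+ n)
  = theta_term (alpha b) n * y ^+ n * x + (theta_tail b n.+1 - theta_tail b n).
Proof.
rewrite (bracketMr hP) (bracketXr_eq0 hP _ bracket_x_Xinv) mulr0 addr0 hPx.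
rewrite -theta_tail_shift /theta_tail /theta_term.
rewrite (derivationZ halpha) alpha_iter_delta (iter_derivationD hdelta).
rewrite (iter_derivationZ hdelta) (derivationZ hdelta) -iterS scalerDr rmorphD scalerA /=.
by ring.
Qed.

Lemma bracket_x_theta b : P x (theta b) = theta (alpha b) * x.
Proof.
set N := (nil_index b).+1.
have hN : iter N delta b = 0.
  exact: (iter_derivation_eq0 hdelta (iter_nil_index b) (leqnSn _)).
have hNa : iter N delta (alpha b) = 0.
  have := alpha_iter_delta N b.
  by rewrite hN (iter_derivationD hdelta) (iter_derivationZ hdelta) hN scaler0 addr0
    (derivation0 halpha).
rewrite -(theta_sumE hN) -(theta_sumE hNa) /theta_sum (bracket_sumr hP sc1) mulr_suml.
under eq_bigr => n _ do rewrite bracket_x_theta_term.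
rewrite big_split /= -[RHS]addr0; congr (_ + _).
rewrite -(big_mkord xpredT (fun n => theta_tail b n.+1 - theta_tail b n)) telescope_sumr //=.
by rewrite iter_nil_index (derivation0 hdelta) scaler0 rmorph0 mul0r subr0.
Qed.

End XBracket.

End Theta.

Theorem lemma3p5 (k : fieldType) (B : comAlgType k)
    (br : B -> B -> B) (alpha delta : B -> B) (s : k) :
  [pchar k] =i pred0 ->
  poisson_poly_data br alpha delta ->
  locally_nilpotent delta ->
  s != 0 ->
  (forall b, alpha (delta b) = delta (alpha b + s *: b)) ->
  exists theta : B -> laurent B,
    [/\ (forall b (N : nat), iter N delta b = 0 -> theta b = theta_sum s delta N b),
        (* theta is a k-algebra homomorphism *)
        [/\ theta 1 = 1,
            forall a b, theta (a + b) = theta a + theta b,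
            forall a b, theta (a * b) = theta a * theta b
          & forall (c : k) b, theta (c *: b) = lemb (c%:A) * theta b]
      & (* {x, theta b} = theta(alpha b) x in B[x^{+-1}; alpha, delta]_p *)
        forall P : laurent B -> laurent B -> laurent B,
          is_poisson_bracket (fun (c : k) (f : laurent B) => lemb (c%:A) * f) P ->
          (forall a b, P (lemb a) (lemb b) = lemb (br a b)) ->
          (forall b, P (lX B) (lemb b) = lemb (alpha b) * lX B + lemb (delta b)) ->
          forall b, P (lX B) (theta b) = theta (alpha b) * lX B].
Proof.
move=> hchar hpd hnil hs had; exists (theta s hnil); split.
- by move=> b N hN; rewrite (theta_sumE s hpd hnil hN).
- exact: (theta_is_algebra_morphism s hchar hpd hnil).
- by move=> P hP _ hPx; apply: (bracket_x_theta s hchar hpd hnil hs had _ hP hPx).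
Qed.
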